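(* For every $0<\alpha<1$, every fixed integer $r\ge3$, and $k=\mathcal{O}(n^\alpha)$, there exists a binary $(r,k)$-batch code of dimension $n$ with rate $\frac{r}{r+k}$.
   Context: A binary linear code of length $N$ encoding $n$ information bits $x_1,\dots,x_n$ is an $(r,k)$-batch code if for every multiset $\{i_1,\dots,i_k\}$ of indices there exist $k$ mutually disjoint sets $R_1,\dots,R_k$ of coordinates, each of size at most $r$, such that $x_{i_j}$ is a function of the codeword bits indexed by $R_j$. Its rate is $n/N$. *)

From Stdlib Require Import Reals.
From mathcomp Require Import all_boot all_order all_algebra.
Set Implicit Arguments. Unset Strict Implicit. Unset Printing Implicit Defensive.
Import GRing.Theory.

(* x_i is a function of the codeword bits indexed by S: any two messages whose
   codewords agree on S have the same i-th information bit. *)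
Definition recovers (n N : nat) (G : 'M['F_2]_(n, N)) (S : {set 'I_N}) (i : 'I_n) : Prop :=
  forall x y : 'rV['F_2]_n,
    (forall t : 'I_N, t \in S -> (x *m G)%R ord0 t = (y *m G)%R ord0 t) -> x ord0 i = y ord0 i.

(* (r,k)-batch code: for every multiset {i_1,...,i_k} of indices (represented
   by a k-indexed family, repetitions allowed) there are k mutually disjoint
   recovery sets of size at most r. *)
Definition is_batch_code (n N : nat) (G : 'M['F_2]_(n, N)) (r k : nat) : Prop :=
  forall idx : 'I_k -> 'I_n,
    exists R : 'I_k -> {set 'I_N},
      (forall j, #|R j| <= r)%N /\
      (forall j j', j != j' -> [disjoint R j & R j']) /\
      (forall j, recovers G (R j) (idx j)).

Definition rate (n N : nat) : rat := GRing.mul (n%:R : rat) (GRing.inv (N%:R : rat)).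

Definition bigO_pow (k : nat -> nat) (alpha : R) : Prop :=
  exists (C : R) (n1 : nat), forall n : nat, (n1 <= n)%N ->
    Rle (INR (k n)) (Rmult C (Rpower (INR n) alpha)).

(** Take a hypergraph on the [n] information bits whose edges have at most [r]
    vertices, any two edges share at most one vertex, no three edges form a triangle,
    and every vertex lies on at least [k - 1] edges.  Store the bits followed by one
    parity bit per edge.  In a request the first copy of each index is read directly;
    every further copy of [u] is read from an edge [e] through [u] as the parity of
    [e] plus the other bits of [e].  These edges can be chosen greedily, because each
    of the other [k - 2] requests rules out at most one edge through [u].

    Such hypergraphs are the lines [x = a + i b (mod M)] drawn on [r] columns of
    [Z_M], with slopes [b] from a set admitting no solution of
    [p b1 + s b2 + q b3 = q b1 + p b2 + s b3].  As in Behrend's construction, the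
    numbers whose base-[3rd] digit vectors lie on a common sphere form such a set,
    large enough to give [k - 1] slopes when [k = O(n^alpha)] with [alpha < 1].
    With [M] about [n / r] there are at most [n k / r] parity bits, and padding with
    zero columns gives length exactly [n (r + k) / r]. *)

From Stdlib Require Import Reals Lra.
From mathcomp Require Import all_boot all_order all_algebra.
From mathcomp Require Import zify ring.
Set Implicit Arguments. Unset Strict Implicit. Unset Printing Implicit Defensive.
Import GRing.Theory Num.Theory.

Section ZeroPadding.
Variables (n N N' : nat) (G : 'M['F_2]_(n, N)).
Hypothesis leNN' : N <= N'.

Definition pad_columns : 'M['F_2]_(n, N') :=
  \matrix_(i, t) oapp (G i) 0%R (insub (val t)).

Local Notation widen := (widen_ord leNN').

Lemma widen_inj : injective widen.
Proof. by move=> s t /(congr1 val) /= /val_inj. Qed.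

Lemma pad_columnsE (x : 'rV['F_2]_n) t :
  (x *m pad_columns)%R ord0 (widen t) = (x *m G)%R ord0 t.
Proof. by rewrite !mxE; apply: eq_bigr => i _; rewrite mxE /= valK. Qed.

Lemma recovers_pad_columns S i : recovers G S i -> recovers pad_columns (widen @: S) i.
Proof.
move=> recS x y agree; apply: recS => t tS.
by rewrite -!pad_columnsE; apply: agree; rewrite imset_f.
Qed.

Lemma batch_code_pad_columns r k : is_batch_code G r k -> is_batch_code pad_columns r k.
Proof.
move=> batch idx; have [R [cardR [disjR recR]]] := batch idx.
exists (fun j => widen @: R j); split; [|split].
- by move=> j; rewrite card_imset //; exact: widen_inj.
- by move=> j j' neq; rewrite imset_disjoint ?disjR //; exact: widen_inj.
- by move=> j; exact: recovers_pad_columns.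
Qed.

End ZeroPadding.

Section HypergraphCode.
Variables (n E : nat) (edge : 'I_E -> {set 'I_n}).

Definition incidence_mx : 'M['F_2]_(n, E) := \matrix_(v, e) (v \in edge e)%:R%R.

Definition hypergraph_code : 'M['F_2]_(n, n + E) := row_mx 1%:M%R incidence_mx.

Lemma hypergraph_code_lshift (x : 'rV['F_2]_n) v :
  (x *m hypergraph_code)%R ord0 (lshift E v) = x ord0 v.
Proof. by rewrite mul_mx_row mulmx1 row_mxEl. Qed.

Lemma hypergraph_code_rshift (x : 'rV['F_2]_n) e :
  (x *m hypergraph_code)%R ord0 (rshift n e) = (\sum_(v in edge e) x ord0 v)%R.
Proof.
rewrite mul_mx_row row_mxEr mxE [RHS]big_mkcond /=; apply: eq_bigr => v _.
by rewrite mxE; case: (v \in edge e); rewrite ?mulr1 ?mulr0.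
Qed.

Definition sys_set v : {set 'I_(n + E)} := [set lshift E v].

Definition edge_set u e : {set 'I_(n + E)} := rshift n e |: lshift E @: (edge e :\ u).

Lemma recovers_sys_set v : recovers hypergraph_code (sys_set v) v.
Proof. by move=> x y agree; rewrite -!hypergraph_code_lshift; apply: agree; rewrite inE. Qed.

Lemma recovers_edge_set u e : u \in edge e -> recovers hypergraph_code (edge_set u e) u.
Proof.
move=> ue x y agree.
have := agree _ (setU11 _ _); rewrite !hypergraph_code_rshift !(bigD1 u ue) /=.
suff -> : (\sum_(v in edge e | v != u) x ord0 v = \sum_(v in edge e | v != u) y ord0 v)%R.
  exact: addIr.
apply: eq_bigr => v /andP[ve vu]; rewrite -!hypergraph_code_lshift; apply: agree.
by rewrite setU1r // imset_f // !inE vu.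
Qed.

Lemma card_edge_set u e : u \in edge e -> #|edge_set u e| = #|edge e|.
Proof.
move=> ue; rewrite cardsU1 card_imset; last exact: lshift_inj.
have -> : (rshift n e \in lshift E @: (edge e :\ u)) = false.
  by apply/imsetP => -[v _ /eqP]; rewrite eq_rlshift.
by rewrite [in RHS](cardsD1 u) ue.
Qed.

Lemma disjoint_sys_set v w : v != w -> [disjoint sys_set v & sys_set w].
Proof. by move=> vw; rewrite disjoints1 inE eq_lshift. Qed.

Lemma disjoint_edge_sys_set u e v :
  [disjoint edge_set u e & sys_set v] = (v \notin edge e :\ u).
Proof.
by rewrite disjoint_sym disjoints1 !inE eq_lrshift /= mem_imset ?inE //; exact: lshift_inj.
Qed.

Lemma meet_edge_set u e v c : ~~ [disjoint edge_set u e & edge_set v c] ->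
  e = c \/ exists2 w, w \in edge e :\ u & w \in edge c :\ v.
Proof.
case/pred0Pn => t /andP[] /setU1P[-> | /imsetP[w wE ->]] /setU1P[].
- by move/rshift_inj; left.
- by case/imsetP => w _ /eqP; rewrite eq_rlshift.
- by move/eqP; rewrite eq_lrshift.
- by case/imsetP => w' w'C /lshift_inj eqw; right; exists w; rewrite // eqw.
Qed.

End HypergraphCode.

Lemma greedy_choice (T : Type) (x0 : T) (k : nat) (ok : 'I_k -> T -> Prop)
    (compat : T -> T -> Prop) :
  (forall x y, compat x y -> compat y x) ->
  (forall (j : 'I_k) (ch : 'I_k -> T), (forall i : 'I_k, i < j -> ok i (ch i)) ->
     exists2 x, ok j x & forall i : 'I_k, i < j -> compat x (ch i)) ->
  exists ch : 'I_k -> T, (forall j, ok j (ch j)) /\ (forall i j, i != j -> compat (ch i) (ch j)).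
Proof.
move=> compatC step.
have prefix t : t <= k -> exists ch : 'I_k -> T,
    (forall j : 'I_k, j < t -> ok j (ch j)) /\
    (forall i j : 'I_k, i < t -> j < t -> i != j -> compat (ch i) (ch j)).
  elim: t => [|t IH] ltk; first by exists (fun=> x0).
  have [ch [okch compatch]] := IH (ltnW ltk).
  pose jt : 'I_k := Ordinal ltk.
  have [x okx compatx] := step jt ch okch.
  have ltS (j : 'I_k) : (j < t.+1) = (j == jt) || (j < t).
    by rewrite ltnS leq_eqVlt -val_eqE.
  exists (fun j => if j == jt then x else ch j); split.
  - by move=> j; rewrite ltS; case: eqP => [-> | _ /=]; [move=> _; exact: okx | exact: okch].
  - move=> i j; rewrite !ltS; case: eqP => [-> _ | _ /= lti]; case: eqP => [-> _ | _ /= ltj] //.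
    + by rewrite eqxx.
    + by move=> _; exact: compatx.
    + by move=> _; apply: compatC; exact: compatx.
    + exact: compatch.
have [ch [okch compatch]] := prefix k (leqnn k).
by exists ch; split=> [j | i j]; [exact: okch | exact: compatch].
Qed.

Lemma card_bigcup_le (I T : finType) (J : {pred I}) (F : I -> {set T}) :
  #|\bigcup_(j in J) F j| <= \sum_(j in J) #|F j|.
Proof.
elim/big_rec2: _ => [|j A s _ IH]; first by rewrite cards0.
by rewrite (leq_trans (leq_card_setU _ _).1) // leq_add2l.
Qed.

Section HypergraphBatchCode.
Variables (n E r k : nat) (edge : 'I_E -> {set 'I_n}).
Hypothesis r_gt0 : 0 < r.
Hypothesis card_edge : forall e, #|edge e| <= r.
Hypothesis edge_linear : forall e e', e != e' -> #|edge e :&: edge e'| <= 1.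
Hypothesis edge_triangle_free : forall (e1 e2 e3 : 'I_E) (x12 x13 x23 : 'I_n),
  e1 != e2 -> e1 != e3 -> e2 != e3 -> x12 != x13 -> x12 != x23 -> x13 != x23 ->
  x12 \in edge e1 :&: edge e2 -> x13 \in edge e1 :&: edge e3 ->
  x23 \in edge e2 :&: edge e3 -> False.
Hypothesis min_degree : forall u, k.-1 <= #|[set e | u \in edge e]|.

Local Notation sys_set := (@sys_set n E).
Local Notation edge_set := (edge_set edge).

Lemma edge_eq_of_two_common e e' v w : v != w ->
  v \in edge e -> w \in edge e -> v \in edge e' -> w \in edge e' -> e = e'.
Proof.
move=> vw ve we ve' we'; apply/eqP/negPn/negP => /edge_linear /card_le1_eqP.
by move=> /(_ v w); rewrite !inE ve we ve' we' => /(_ isT isT) vw_eq; rewrite vw_eq eqxx in vw.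
Qed.

Definition blocked u (S : {set 'I_(n + E)}) :=
  [set e | (u \in edge e) && ~~ [disjoint edge_set u e & S]].

Lemma blocked_sys_set_self u : blocked u (sys_set u) = set0.
Proof. by apply/setP => e; rewrite !inE disjoint_edge_sys_set !inE eqxx andbF. Qed.

Lemma blocked_set0 u : blocked u set0 = set0.
Proof. by apply/setP => e; rewrite !inE -setI_eq0 setI0 eqxx andbF. Qed.

Lemma card_blocked_sys_set u v : #|blocked u (sys_set v)| <= 1.
Proof.
apply/card_le1_eqP => e1 e2; rewrite !inE !disjoint_edge_sys_set !negbK !inE.
move=> /andP[ue1 /andP[vu ve1]] /andP[ue2 /andP[_ ve2]].
by apply: (edge_eq_of_two_common vu).
Qed.

Lemma card_blocked_edge_set u v c : v \in edge c -> (u \in edge c -> u = v) ->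
  #|blocked u (edge_set v c)| <= 1.
Proof.
(* If [u] lies on [c], linearity pins every blocked edge to [c]; otherwise two
   blocked edges through [u] would close a triangle with [c]. *)
move=> vc uc_v; apply/card_le1_eqP.
have [uc | nuc] := boolP (u \in edge c).
  have {}uc_v := uc_v uc; subst v.
  suff onlyc e : e \in blocked u (edge_set u c) -> e = c.
    by move=> e1 e2 /onlyc -> /onlyc ->.
  rewrite inE => /andP[ue /meet_edge_set[// | [w]]].
  rewrite !inE => /andP[wu we] /andP[_ wc].
  exact: (edge_eq_of_two_common wu).
have meets e : e \in blocked u (edge_set v c) ->
    [/\ u \in edge e, e != c & exists2 w, w \in edge e :&: edge c & w != u].
  rewrite inE => /andP[ue /meet_edge_set[ec | [w]]]; first by rewrite -ec ue in nuc.
  rewrite !inE => /andP[wu we] /andP[_ wc]; split => //; last by exists w; rewrite ?inE ?we.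
  by apply: contraNneq nuc => <-.
move=> e1 e2 /meets[ue1 e1c [w1 w1E w1u]] /meets[ue2 e2c [w2 w2E w2u]].
apply/eqP/negPn/negP => e12.
move: w1E w2E; rewrite !inE => /andP[w1e1 w1c] /andP[w2e2 w2c].
have [eqw | w12] := eqVneq w1 w2.
  subst w2; apply/(negP e12)/eqP.
  by apply: (edge_eq_of_two_common (v := u) (w := w1)); rewrite // eq_sym.
rewrite eq_sym in e12.
apply: (@edge_triangle_free e1 e2 c u w1 w2 e12 e1c e2c _ _ w12);
  by rewrite 1?eq_sym // !inE ?ue1 ?ue2 ?w1e1 ?w2e2 ?w1c ?w2c.
Qed.

Section Requests.
Variable idx : 'I_k -> 'I_n.

Definition first_request (j : 'I_k) := [forall i : 'I_k, (i < j) ==> (idx i != idx j)].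

Lemma first_request_exists j : exists2 f, first_request f & idx f = idx j.
Proof.
have [f /eqP idxf minf] := arg_minnP (P := fun f => idx f == idx j) val (eqxx (idx j)).
exists f => //; apply/forallP => i; apply/implyP => ltif; apply/eqP => idxi.
by have := minf i; rewrite idxi idxf eqxx leqNgt ltif => /(_ isT).
Qed.

Definition valid_recovery (j : 'I_k) (S : {set 'I_(n + E)}) : Prop :=
  if first_request j then S = sys_set (idx j)
  else exists e, [/\ idx j \in edge e, S = edge_set (idx j) e &
                     forall i, idx i \in edge e -> idx i = idx j].

Lemma card_valid_recovery j S : valid_recovery j S -> #|S| <= r.
Proof.
rewrite /valid_recovery; case: ifP => [_ -> | _ [e [je -> _]]]; first by rewrite cards1.
by rewrite card_edge_set.
Qed.

Lemma recovers_valid_recovery j S : valid_recovery j S -> recovers (hypergraph_code edge) S (idx j).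
Proof.
rewrite /valid_recovery; case: ifP => [_ -> | _ [e [je -> _]]]; first exact: recovers_sys_set.
exact: recovers_edge_set.
Qed.

Lemma card_blocked_valid_recovery i j S : valid_recovery j S -> #|blocked (idx i) S| <= 1.
Proof.
rewrite /valid_recovery; case: ifP => [_ -> | _ [e [je -> privj]]].
  exact: card_blocked_sys_set.
by apply: card_blocked_edge_set => //; exact: privj.
Qed.

Section Step.
Variables (jt : 'I_k) (ch : 'I_k -> {set 'I_(n + E)}).
Hypothesis valid_ch : forall j : 'I_k, j < jt -> valid_recovery j (ch j).

Local Notation u := (idx jt).

(* First requests after [jt] will be served by their systematic bit, so they
   constrain the choice for [jt] as much as the requests already served. *)
Definition committed (j : 'I_k) : {set 'I_(n + E)} :=
  if j < jt then ch j else if first_request j then sys_set (idx j) else set0.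

Lemma committed_first j : first_request j -> committed j = sys_set (idx j).
Proof.
move=> firstj; rewrite /committed firstj; case: ifP => // ltj.
by have := valid_ch ltj; rewrite /valid_recovery firstj.
Qed.

Lemma card_blocked_committed j : #|blocked u (committed j)| <= 1.
Proof.
rewrite /committed; case: ifP => [ltj | _]; first exact: card_blocked_valid_recovery (valid_ch ltj).
by case: ifP => _; rewrite ?blocked_set0 ?cards0 ?card_blocked_sys_set.
Qed.

Lemma exists_unblocked_edge : ~~ first_request jt ->
  exists e, u \in edge e /\ forall j, j != jt -> e \notin blocked u (committed j).
Proof.
(* The first occurrence [f] of [u] blocks nothing, and each of the other [k - 2]
   requests blocks at most one of the [k - 1] edges through [u]. *)
move=> notfirst; have [f firstf idxf] := first_request_exists jt.
have fjt : f != jt by apply: contraNneq notfirst => <-.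
have blocked_f : blocked u (committed f) = set0.
  by rewrite committed_first // idxf blocked_sys_set_self.
set J := [set: 'I_k] :\ jt :\ f.
have cardJ : #|J|.+2 = k.
  have cardT : #|[set: 'I_k]| = k by rewrite cardsT card_ord.
  move: (cardsD1 jt [set: 'I_k]) (cardsD1 f ([set: 'I_k] :\ jt)).
  by rewrite !inE fjt /= => h1 h2; rewrite -[in RHS]cardT h1 h2.
have card_bad : #|\bigcup_(j in J) blocked u (committed j)| < #|[set e | u \in edge e]|.
  apply: leq_trans (min_degree u).
  have : #|\bigcup_(j in J) blocked u (committed j)| <= #|J|.
    rewrite -[#|J|]sum1_card; apply: (leq_trans (card_bigcup_le _ _)).
    by apply: leq_sum => j _; exact: card_blocked_committed.
  by move: cardJ; lia.
have /subsetPn[e ue unblocked] : ~~ ([set e | u \in edge e] \subset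
                                    \bigcup_(j in J) blocked u (committed j)).
  by apply/negP => /subset_leq_card; rewrite leqNgt card_bad.
exists e; split=> [|j jjt]; first by rewrite inE in ue.
have [-> | jf] := eqVneq j f; first by rewrite blocked_f inE.
by apply: contra unblocked => blockedj; apply/bigcupP; exists j; rewrite // !inE jf jjt.
Qed.

Lemma valid_recovery_step :
  exists2 S, valid_recovery jt S & forall j : 'I_k, j < jt -> [disjoint S & ch j].
Proof.
have [firstjt | notfirst] := boolP (first_request jt).
  exists (sys_set u); first by rewrite /valid_recovery firstjt.
  move=> j ltj; have := valid_ch ltj; rewrite /valid_recovery.
  case: ifP => [_ -> | _ [e [je -> privj]]].
    by apply: disjoint_sys_set; rewrite eq_sym; have := forallP firstjt j; rewrite ltj.
  rewrite disjoint_sym disjoint_edge_sys_set !inE.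
  by apply/negP => /andP[uj ue]; rewrite (privj jt ue) eqxx in uj.
have [e [ue unblocked]] := exists_unblocked_edge notfirst.
exists (edge_set u e); first rewrite /valid_recovery (negbTE notfirst).
  exists e; split => // i ie; apply/eqP/negPn/negP => iu.
  have [g firstg idxg] := first_request_exists i.
  have gjt : g != jt by apply: contraNneq notfirst => <-.
  have := unblocked g gjt.
  by rewrite committed_first // inE ue disjoint_edge_sys_set !inE idxg iu ie.
move=> j ltj; have jjt : j != jt by apply: contraTneq ltj => ->; rewrite ltnn.
by have := unblocked j jjt; rewrite /committed ltj inE ue negbK.
Qed.

End Step.
End Requests.

Lemma hypergraph_batch_code : is_batch_code (hypergraph_code edge) r k.
Proof.
move=> idx.
have disjC (S T : {set 'I_(n + E)}) : [disjoint S & T] -> [disjoint T & S].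
  by rewrite disjoint_sym.
have [R [validR disjR]] := greedy_choice set0 disjC (valid_recovery_step (idx := idx)).
exists R; split; [|split] => [j | // | j].
- exact: card_valid_recovery (validR j).
- exact: recovers_valid_recovery (validR j).
Qed.

End HypergraphBatchCode.

Lemma eqmodD (M x1 y1 x2 y2 : nat) :
  x1 = y1 %[mod M] -> x2 = y2 %[mod M] -> x1 + x2 = y1 + y2 %[mod M].
Proof. by move=> h1 h2; rewrite -modnDm h1 h2 modnDm. Qed.

Lemma eqmod_addl_small (M c x y : nat) :
  c + x = c + y %[mod M] -> x < M -> y < M -> x = y.
Proof.
move=> h ltx lty; apply/eqP; rewrite -(modn_small ltx) -(modn_small lty).
by rewrite -(eqn_modDl c); apply/eqP.
Qed.

Lemma eqmod_cycle2 (M a1 a2 x1 x2 y1 y2 : nat) :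
  a1 + x1 = a2 + y1 %[mod M] -> a2 + x2 = a1 + y2 %[mod M] ->
  a1 + a2 + (x1 + x2) = a1 + a2 + (y1 + y2) %[mod M].
Proof. by move=> h1 h2; have := eqmodD h1 h2; congr (_ = _ %[mod M]); lia. Qed.

Lemma eqmod_cycle3 (M a1 a2 a3 x1 x2 x3 y1 y2 y3 : nat) :
  a1 + x1 = a2 + y1 %[mod M] -> a2 + x2 = a3 + y2 %[mod M] -> a3 + x3 = a1 + y3 %[mod M] ->
  a1 + a2 + a3 + (x1 + x2 + x3) = a1 + a2 + a3 + (y3 + y1 + y2) %[mod M].
Proof. by move=> h1 h2 h3; have := eqmodD (eqmodD h1 h2) h3; congr (_ = _ %[mod M]); lia. Qed.

Lemma eq_mul_swap (i j b b' : nat) : i != j -> i * b + j * b' = i * b' + j * b -> b = b'.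
Proof. by case: (ltngtP i j) => // ltij _ eqs; nia. Qed.

(* Adding up the incidence equations of three lines with slopes [b1], [b2], [b3]
   meeting pairwise in columns [p], [q], [s] gives this equation modulo [M]. *)
Definition triangle_free_slopes (r : nat) (B : seq nat) :=
  forall b1 b2 b3, b1 \in B -> b2 \in B -> b3 \in B ->
  b1 != b2 -> b1 != b3 -> b2 != b3 ->
  forall p q s, p < r -> q < r -> s < r -> p != q -> p != s -> q != s ->
  p * b1 + s * b2 + q * b3 != q * b1 + p * b2 + s * b3.

Section Lines.
Variables (n r M : nat) (B : seq nat).
Hypothesis M_gt0 : 0 < M.
Hypothesis n_le : n <= r * M.
Hypothesis uniq_B : uniq B.
Hypothesis slope_small : forall b, b \in B -> 3 * r * b < M.
Hypothesis B_triangle_free : triangle_free_slopes r B.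

Local Notation K := (size B).

Definition column (v : 'I_n) := v %/ M.
Definition offset (e : 'I_(M * K)) := e %/ K.
Definition slope (e : 'I_(M * K)) := nth 0 B (e %% K).

Definition line (e : 'I_(M * K)) : {set 'I_n} :=
  [set v : 'I_n | v == offset e + column v * slope e %[mod M]].

Lemma lineP e (v : 'I_n) : (v \in line e) = (v == offset e + column v * slope e %[mod M]).
Proof. by rewrite inE. Qed.

Lemma column_lt (v : 'I_n) : column v < r.
Proof. by rewrite ltn_divLR // (leq_trans (ltn_ord v)). Qed.

Lemma size_B_gt0 (e : 'I_(M * K)) : 0 < K.
Proof. by have := ltn_ord e; case: (size B) (nat_of_ord e) => // x; rewrite muln0. Qed.

Lemma offset_lt e : offset e < M.
Proof. by rewrite ltn_divLR ?(size_B_gt0 e) // mulnC. Qed.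

Lemma slope_in e : slope e \in B.
Proof. by rewrite mem_nth // ltn_mod (size_B_gt0 e). Qed.

Lemma line_column_inj e (v w : 'I_n) :
  v \in line e -> w \in line e -> column v = column w -> v = w.
Proof.
rewrite !lineP => /eqP onv /eqP onw eqcol; apply: val_inj => /=.
by rewrite (divn_eq v M) (divn_eq w M) -!/(column _) eqcol onv onw eqcol.
Qed.

Lemma line_inj e e' i : offset e + i * slope e = offset e' + i * slope e' %[mod M] ->
  slope e = slope e' -> e = e'.
Proof.
move=> meet eqslope; have K_gt0 := size_B_gt0 e.
have eqmodK : e %% K = e' %% K.
  by apply/eqP; rewrite -(nth_uniq 0 _ _ uniq_B) ?ltn_mod //; apply/eqP.
have eqoffset : offset e = offset e'.
  apply: (@eqmod_addl_small M (i * slope e)); rewrite ?offset_lt //.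
  by rewrite addnC [X in _ = X %[mod M]]addnC eqslope; rewrite eqslope in meet.
by apply: val_inj; rewrite /= (divn_eq e K) (divn_eq e' K) -!/(offset _) eqoffset eqmodK.
Qed.

Lemma slope_comb2_lt p q b1 b2 : p < r -> q < r -> b1 \in B -> b2 \in B ->
  p * b1 + q * b2 < M.
Proof. by move=> ? ? /slope_small ? /slope_small ?; nia. Qed.

Lemma slope_comb3_lt p q s b1 b2 b3 : p < r -> q < r -> s < r ->
  b1 \in B -> b2 \in B -> b3 \in B -> p * b1 + q * b2 + s * b3 < M.
Proof. by move=> ? ? ? /slope_small ? /slope_small ? /slope_small ?; nia. Qed.

Lemma line_meet e e' x : x \in line e -> x \in line e' ->
  offset e + column x * slope e = offset e' + column x * slope e' %[mod M].
Proof. by rewrite !lineP => /eqP <- /eqP <-. Qed.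

Lemma line_columnN e (x y : 'I_n) :
  x != y -> x \in line e -> y \in line e -> column x != column y.
Proof. by move=> xy xe ye; apply: contra_neq xy; exact: (line_column_inj xe ye). Qed.

Lemma line_linear e e' : e != e' -> #|line e :&: line e'| <= 1.
Proof.
move=> ee'; apply/card_le1_eqP => v w; rewrite !in_setI => /andP[ve ve'] /andP[we we'].
have [eqcol | vw_col] := eqVneq (column v) (column w).
  by rewrite (line_column_inj ve we eqcol).
have ltv := column_lt v; have ltw := column_lt w.
have := eqmod_cycle2 (line_meet ve ve') (line_meet we' we).
move=> /eqmod_addl_small; rewrite !slope_comb2_lt ?slope_in // => /(_ isT isT).
move=> /(eq_mul_swap vw_col) eqslope.
by exfalso; move: ee'; rewrite (line_inj (line_meet ve ve') eqslope) eqxx.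
Qed.

Lemma line_triangle_free (e1 e2 e3 : 'I_(M * K)) (x12 x13 x23 : 'I_n) :
  e1 != e2 -> e1 != e3 -> e2 != e3 -> x12 != x13 -> x12 != x23 -> x13 != x23 ->
  x12 \in line e1 :&: line e2 -> x13 \in line e1 :&: line e3 ->
  x23 \in line e2 :&: line e3 -> False.
Proof.
move=> e12 e13 e23 x12_13 x12_23 x13_23.
rewrite !in_setI => /andP[a1 a2] /andP[b1 b3] /andP[c2 c3].
have slopeN x e e' : x \in line e -> x \in line e' -> e != e' -> slope e != slope e'.
  by move=> xe xe'; apply: contra_neq; exact: (line_inj (line_meet xe xe')).
have ltp := column_lt x12; have ltq := column_lt x13; have lts := column_lt x23.
have := eqmod_cycle3 (line_meet a1 a2) (line_meet c2 c3) (line_meet b3 b1).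
move=> /eqmod_addl_small; rewrite !slope_comb3_lt ?slope_in // => /(_ isT isT) /eqP.
apply/negP/B_triangle_free; rewrite ?slope_in //.
- exact: slopeN a1 a2 e12.
- exact: slopeN b1 b3 e13.
- exact: slopeN c2 c3 e23.
- exact: line_columnN a1 b1.
- exact: line_columnN a2 c2.
- exact: line_columnN b3 c3.
Qed.

Lemma card_line e : #|line e| <= r.
Proof.
pose col (v : 'I_n) : 'I_r := Ordinal (column_lt v).
rewrite -(@card_in_imset _ _ col); first by rewrite (leq_trans (max_card _)) ?card_ord.
by move=> v w ve we /(congr1 val) /(line_column_inj ve we).
Qed.

Lemma line_index_lt (a : 'I_M) (t : 'I_K) : a * K + t < M * K.
Proof.
apply: (@leq_trans (a.+1 * K)); first by rewrite mulSn addnC ltn_add2r.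
by rewrite leq_mul2r ltn_ord orbT.
Qed.

Definition line_index (a : 'I_M) (t : 'I_K) : 'I_(M * K) := Ordinal (line_index_lt a t).

Lemma offset_line_index a t : offset (line_index a t) = a.
Proof. by rewrite /offset /= divnMDl ?divn_small ?addn0 // (leq_ltn_trans _ (ltn_ord t)). Qed.

Lemma slope_line_index a t : slope (line_index a t) = nth 0 B t.
Proof. by rewrite /slope /= modnMDl modn_small. Qed.

(* [M.-1 * x] stands for [- x] modulo [M]. *)
Definition through_offset (u : 'I_n) (b : nat) : 'I_M :=
  Ordinal (ltn_pmod (u + M.-1 * (column u * b)) M_gt0).

Lemma mem_line_through (u : 'I_n) (t : 'I_K) :
  u \in line (line_index (through_offset u (nth 0 B t)) t).
Proof.
rewrite lineP offset_line_index slope_line_index /= modnDml -addnA -mulSnr prednK //.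
by rewrite addnC mulnC modnMDl.
Qed.

Lemma line_degree (u : 'I_n) : K <= #|[set e | u \in line e]|.
Proof.
pose f (t : 'I_K) := line_index (through_offset u (nth 0 B t)) t.
have f_inj : injective f.
  move=> t t' /(congr1 (fun e : 'I_(M * K) => val e %% K)) /=.
  by rewrite !modnMDl !modn_small // => /val_inj.
have sub : f @: 'I_K \subset [set e | u \in line e].
  by apply/subsetP => _ /imsetP[t _ ->]; rewrite inE mem_line_through.
by have := subset_leq_card sub; rewrite card_imset ?card_ord.
Qed.

Lemma lines_batch_code k : 0 < r -> size B = k.-1 -> is_batch_code (hypergraph_code line) r k.
Proof.
move=> r_gt0 sizeB; apply: hypergraph_batch_code => //.
- exact: card_line.
- exact: line_linear.
- exact: line_triangle_free.
- by move=> u; rewrite -sizeB; exact: line_degree.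
Qed.

End Lines.

Section Digits.
Variable D : nat.
Hypothesis D_gt0 : 0 < D.

Lemma digits_sumS m (y : 'I_m.+1 -> nat) :
  \sum_(t < m.+1) y t * D ^ t = y ord0 + D * \sum_(t < m) y (lift ord0 t) * D ^ t.
Proof.
rewrite big_ord_recl expn0 muln1 big_distrr /=; congr (_ + _).
by apply: eq_bigr => i _; rewrite /bump /= add1n expnS mulnCA.
Qed.

Lemma digits_sum_lt m (y : 'I_m -> nat) :
  (forall t, y t < D) -> \sum_(t < m) y t * D ^ t < D ^ m.
Proof.
elim: m y => [|m IH] y y_lt; first by rewrite big_ord0 expn0.
rewrite digits_sumS expnS.
have := IH (fun t => y (lift ord0 t)) (fun t => y_lt _).
set A := \sum_(t < m) _ => ltA.
apply: (@leq_trans (D * A.+1)); first by rewrite mulnS ltn_add2r y_lt.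
by rewrite leq_mul2l ltA orbT.
Qed.

Lemma digits_sum_inj m (y z : 'I_m -> nat) : (forall t, y t < D) -> (forall t, z t < D) ->
  \sum_(t < m) y t * D ^ t = \sum_(t < m) z t * D ^ t -> forall t, y t = z t.
Proof.
elim: m y z => [|m IH] y z y_lt z_lt; first by move=> _ [].
rewrite !digits_sumS => eq_sum.
have eq0 : y ord0 = z ord0.
  have := congr1 (modn^~ D) eq_sum.
  by rewrite /= ![D * _]mulnC ![_ + _ * D]addnC !modnMDl !modn_small.
move: eq_sum; rewrite eq0 => /addnI /eqP; rewrite eqn_pmul2l // => /eqP eq_tail.
move=> t; case: (unliftP ord0 t) => [t'|] ->; last exact: eq0.
exact: (IH _ _ (fun t => y_lt _) (fun t => z_lt _) eq_tail).
Qed.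

End Digits.

Section Sphere.
Local Open Scope ring_scope.

Lemma natr_comb_collinear (R : comPzRingType) (p q s x1 x2 x3 : nat) :
  (p * x1 + s * x2 + q * x3 = q * x1 + p * x2 + s * x3)%N ->
  (p%:R - q%:R) * (x1%:R - x3%:R) + (s%:R - p%:R) * (x2%:R - x3%:R) = 0 :> R.
Proof.
move=> /(congr1 (GRing.natmul (1 : R))); rewrite !natrD !natrM => eqR.
transitivity ((p%:R * x1%:R + s%:R * x2%:R + q%:R * x3%:R) -
              (q%:R * x1%:R + p%:R * x2%:R + s%:R * x3%:R) :> R); first by ring.
by rewrite eqR subrr.
Qed.

Lemma natr_norm2_eq (R : pzRingType) m (y y' : 'I_m -> nat) :
  (\sum_(t < m) y t ^ 2 = \sum_(t < m) y' t ^ 2)%N ->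
  \sum_(t < m) ((y t)%:R ^+ 2 - (y' t)%:R ^+ 2) = 0 :> R.
Proof.
have norm2E (w : 'I_m -> nat) : \sum_(t < m) (w t)%:R ^+ 2 = (\sum_(t < m) w t ^ 2)%:R :> R.
  by rewrite natr_sum; apply: eq_bigr => t _; rewrite natrX.
by move=> eqyy'; rewrite sumrB !norm2E eqyy' subrr.
Qed.

Lemma sphere_collinear_eq (R : realDomainType) m (x1 x2 x3 : 'I_m -> R) (a1 a2 : R) :
  a2 != 0 -> a1 + a2 != 0 ->
  (forall t, a1 * (x1 t - x3 t) + a2 * (x2 t - x3 t) = 0) ->
  \sum_(t < m) (x1 t ^+ 2 - x3 t ^+ 2) = 0 -> \sum_(t < m) (x2 t ^+ 2 - x3 t ^+ 2) = 0 ->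
  forall t, x2 t = x3 t.
Proof.
move=> a2_neq0 a12_neq0 collinear sphere1 sphere2.
have : \sum_(t < m) a2 * (a1 + a2) * (x2 t - x3 t) ^+ 2 = 0.
  transitivity (\sum_(t < m)
      a1 * (a1 * (x1 t ^+ 2 - x3 t ^+ 2) + a2 * (x2 t ^+ 2 - x3 t ^+ 2))).
    apply: eq_bigr => t _; apply/eqP; rewrite -subr_eq0; apply/eqP.
    transitivity ((a1 * (x1 t - x3 t) + a2 * (x2 t - x3 t)) *
                  (a2 * (x2 t - x3 t) - a1 * (x1 t - x3 t) - 2 * a1 * x3 t)); first by ring.
    by rewrite collinear mul0r.
  by rewrite -mulr_sumr big_split /= -!mulr_sumr sphere1 sphere2 !mulr0 addr0 mulr0.
rewrite -mulr_sumr => /eqP; rewrite !mulf_eq0 (negbTE a2_neq0) (negbTE a12_neq0) /=.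
move=> /eqP /psumr_eq0P sq_eq0 t; apply/eqP; rewrite -subr_eq0 -sqrf_eq0; apply/eqP.
by apply: sq_eq0 => // i _; exact: sqr_ge0.
Qed.

End Sphere.

Lemma pigeonhole_fiber (T : finType) K (f : T -> 'I_K.+1) :
  exists i, #|T| <= K.+1 * #|[set x | f x == i]|.
Proof.
pose fiber i := #|[set x | f x == i]|.
have [i _ max_i] := @arg_maxnP _ ord0 predT fiber isT.
exists i; rewrite -[X in X <= _]sum1_card (partition_big f predT) //=.
apply: (@leq_trans (\sum_(j < K.+1) fiber i)); last by rewrite big_const_ord iter_addn_0 mulnC.
apply: leq_sum => j _; apply: leq_trans (max_i j isT).
by rewrite /fiber -sum1_card; apply/eq_leq/eq_bigl => x; rewrite inE.
Qed.

Section Behrend.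
Variables (r d m : nat).
Hypothesis d_gt0 : 0 < d.
Hypothesis r_gt0 : 0 < r.

Local Notation digits := {ffun 'I_m -> 'I_d}.
Local Notation base := (3 * r * d).

Definition digit_value (x : digits) := \sum_(t < m) (x t : nat) * base ^ t.
Definition digit_norm2 (x : digits) := \sum_(t < m) (x t : nat) ^ 2.

Lemma base_gt0 : 0 < base.
Proof. by rewrite !muln_gt0 d_gt0 r_gt0. Qed.

Lemma digit_lt_base (x : digits) t : (x t : nat) < base.
Proof. by apply: leq_trans (ltn_ord _) _; rewrite leq_pmull // muln_gt0 r_gt0. Qed.

Lemma digit_value_lt x : digit_value x < base ^ m.
Proof. exact: (digits_sum_lt (y := fun t => (x t : nat)) (digit_lt_base x)). Qed.

Lemma digit_value_inj : injective digit_value.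
Proof.
move=> x y eqxy; apply/ffunP => t; apply: val_inj.
exact: (digits_sum_inj base_gt0 (digit_lt_base x) (digit_lt_base y) eqxy).
Qed.

Lemma digit_value_comb p s q x1 x2 x3 : p < r -> s < r -> q < r ->
  p * digit_value x1 + s * digit_value x2 + q * digit_value x3 =
  q * digit_value x1 + p * digit_value x2 + s * digit_value x3 ->
  forall t, p * x1 t + s * x2 t + q * x3 t = q * x1 t + p * x2 t + s * x3 t.
Proof.
have comb_digits p' s' q' y1 y2 y3 :
    p' * digit_value y1 + s' * digit_value y2 + q' * digit_value y3 =
    \sum_(t < m) (p' * y1 t + s' * y2 t + q' * y3 t) * base ^ t.
  rewrite /digit_value !big_distrr -!big_split; apply: eq_bigr => t _ /=.
  by rewrite !mulnDl !mulnA.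
have comb_lt p' s' q' (y1 y2 y3 : digits) t : p' < r -> s' < r -> q' < r ->
    p' * y1 t + s' * y2 t + q' * y3 t < base.
  by move: (ltn_ord (y1 t)) (ltn_ord (y2 t)) (ltn_ord (y3 t)) => *; nia.
move=> ltp lts ltq; rewrite !comb_digits => eq_sum.
exact: (digits_sum_inj base_gt0 (y := fun t => p * x1 t + s * x2 t + q * x3 t)
  (z := fun t => q * x1 t + p * x2 t + s * x3 t)
  (fun t => comb_lt _ _ _ _ _ _ t ltp lts ltq) (fun t => comb_lt _ _ _ _ _ _ t ltq ltp lts)
  eq_sum).
Qed.

Lemma digit_sphere_triangle_free (x1 x2 x3 : digits) :
  digit_norm2 x1 = digit_norm2 x3 -> digit_norm2 x2 = digit_norm2 x3 -> x2 != x3 ->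
  forall p q s, p < r -> q < r -> s < r -> p != q -> p != s -> q != s ->
  p * digit_value x1 + s * digit_value x2 + q * digit_value x3 !=
  q * digit_value x1 + p * digit_value x2 + s * digit_value x3.
Proof.
move=> norm13 norm23 x23 p q s ltp ltq lts pq ps qs.
apply/negP => /eqP /(digit_value_comb ltp lts ltq) comb.
have a2_neq0 : (s%:R - p%:R != 0 :> int)%R by rewrite subr_eq0 eqr_nat eq_sym.
have a12_neq0 : ((p%:R - q%:R) + (s%:R - p%:R) != 0 :> int)%R.
  by rewrite addrC addrA subrK subr_eq0 eqr_nat eq_sym.
have := sphere_collinear_eq a2_neq0 a12_neq0 (fun t => natr_comb_collinear _ (comb t))
  (natr_norm2_eq _ (y := fun t => x1 t) (y' := fun t => x3 t) norm13)
  (natr_norm2_eq _ (y := fun t => x2 t) (y' := fun t => x3 t) norm23).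
move=> eq23; apply: (negP x23); apply/eqP/ffunP => t; apply: val_inj.
by apply/eqP; rewrite -(eqr_nat int) eq23.
Qed.

Lemma digit_norm2_lt x : digit_norm2 x < (m * d.-1 ^ 2).+1.
Proof.
rewrite ltnS /digit_norm2 (@leq_trans (\sum_(t < m) d.-1 ^ 2)) //.
  by apply: leq_sum => t _; rewrite leq_exp2r // -ltnS prednK.
by rewrite big_const_ord iter_addn_0 mulnC.
Qed.

Lemma digit_sphere_slopes k : (m * d.-1 ^ 2).+1 * k <= d ^ m ->
  exists B : seq nat, [/\ uniq B, size B = k, (forall b, b \in B -> b < base ^ m) &
                          triangle_free_slopes r B].
Proof.
move=> k_le.
have [R] := pigeonhole_fiber (fun x => Ordinal (digit_norm2_lt x)).
set S := [set x | _] => card_S.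
have k_le_S : k <= #|S|.
  rewrite -(@leq_pmul2l (m * d.-1 ^ 2).+1) // (leq_trans k_le) //.
  by move: card_S; rewrite card_ffun !card_ord.
have normS x : x \in S -> digit_norm2 x = R by rewrite inE -val_eqE => /eqP.
exists (take k (map digit_value (enum S))); split.
- by rewrite take_uniq // map_inj_uniq ?enum_uniq //; exact: digit_value_inj.
- by rewrite size_takel // size_map -cardE.
- by move=> b /mem_take /mapP[x _ ->]; exact: digit_value_lt.
move=> b1 b2 b3 /mem_take /mapP[x1 S1 ->] /mem_take /mapP[x2 S2 ->] /mem_take /mapP[x3 S3 ->].
rewrite !mem_enum in S1 S2 S3.
move=> _ _ neq23; apply: digit_sphere_triangle_free; rewrite ?normS //.
by apply: contraNneq neq23 => ->.
Qed.

End Behrend.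

Lemma leq_expn2r m n e : m <= n -> m ^ e <= n ^ e.
Proof. by case: e => [|e] le_mn; rewrite ?expn0 // leq_exp2r. Qed.

Lemma behrend_size_bound (q K0 d D c m N k : nat) : 0 < d -> 0 < q ->
  d ^ q = 2 ^ q.+1 * D ^ q.-1 -> k ^ q <= K0 * N ^ q.-1 -> N <= c * D ^ m ->
  d ^ (2 * q) * K0 * c ^ q.-1 <= 2 ^ m ->
  (m * d.-1 ^ 2).+1 * k.-1 <= d ^ m.
Proof.
move=> d_gt0 q_gt0 dq kq N_le c_le; rewrite -(leq_exp2r _ _ q_gt0).
set A := (m * d.-1 ^ 2).+1.
have A_le : A <= d ^ 2 * 2 ^ m.
  apply: (@leq_trans (m.+1 * d ^ 2)).
    rewrite /A mulSn addnC -addn1.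
    by rewrite leq_add ?leq_mul2l ?leq_expn2r ?leq_pred ?orbT ?expn_gt0 ?d_gt0.
  by rewrite mulnC leq_mul2l ltn_expl // orbT.
have dmq : (d ^ m) ^ q = 2 ^ m * (2 ^ (m * q) * D ^ (m * q.-1)).
  rewrite -expnM (mulnC m q) expnM dq expnMn -!expnM mulSn expnD.
  by rewrite (mulnC q m) (mulnC q.-1 m) mulnA.
have Akq : (A * k.-1) ^ q <= A ^ q * k ^ q.
  by rewrite expnMn leq_mul2l leq_expn2r ?leq_pred ?orbT.
have Aq : A ^ q <= d ^ (2 * q) * 2 ^ (m * q).
  by apply: (leq_trans (leq_expn2r q A_le)); rewrite expnMn -!expnM (mulnC m q).
have kq' : k ^ q <= K0 * (c ^ q.-1 * D ^ (m * q.-1)).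
  apply: (leq_trans kq); rewrite leq_mul2l; apply/orP; right.
  by rewrite expnM -expnMn; apply: leq_expn2r.
rewrite dmq; apply: (leq_trans Akq); apply: (leq_trans (leq_mul Aq kq')).
set X := 2 ^ (m * q) * D ^ (m * q.-1).
have -> : d ^ (2 * q) * 2 ^ (m * q) * (K0 * (c ^ q.-1 * D ^ (m * q.-1))) =
          (d ^ (2 * q) * K0 * c ^ q.-1) * X by rewrite /X; lia.
by rewrite leq_mul2r c_le orbT.
Qed.

Lemma triangle_free_slopes_exist (r q K0 : nat) : 0 < r -> 0 < q ->
  exists M0, forall M k, M0 <= M -> k ^ q <= K0 * (r * M) ^ q.-1 ->
    exists B, [/\ uniq B, size B = k.-1, (forall b, b \in B -> 3 * r * b < M) &
                  triangle_free_slopes r B].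
Proof.
move=> r_gt0 q_gt0.
(* [d] is chosen so that [d ^ q = 2 ^ q.+1 * D ^ q.-1]: the [2 ^ m] spare factor in
   [(d ^ m) ^ q] then absorbs all constants once [m] is large. *)
set d := 2 ^ q.+1 * (3 * r) ^ q.-1.
set D := 3 * r * d.
set c := 3 * r * r * D.
set c' := d ^ (2 * q) * K0 * c ^ q.-1.
have d_gt0 : 0 < d by rewrite muln_gt0 !expn_gt0 muln_gt0 r_gt0.
have D_gt1 : 1 < D by rewrite /D -mulnA (@leq_trans 3) // leq_pmulr // muln_gt0 r_gt0.
have r3_gt0 : 0 < 3 * r by rewrite muln_gt0 r_gt0.
have dq : d ^ q = 2 ^ q.+1 * D ^ q.-1.
  by rewrite /D expnMn mulnA -/d -expnS prednK.
exists (D ^ c' * (3 * r)) => M k M_ge k_le.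
set m := trunc_log D (M %/ (3 * r)).
have Dc'_le : D ^ c' <= M %/ (3 * r) by rewrite leq_divRL.
have c'_le_m : c' <= m by apply: trunc_log_max.
have Dm_le : D ^ m * (3 * r) <= M.
  by rewrite -leq_divRL //; apply: trunc_logP => //; apply: leq_trans Dc'_le; rewrite expn_gt0 ltnW.
have M_lt : M < D ^ m.+1 * (3 * r) by rewrite -ltn_divLR //; apply: trunc_log_ltn.
have rM_le : r * M <= c * D ^ m.
  apply: (@leq_trans (r * (D ^ m.+1 * (3 * r)))); first by rewrite leq_mul2l ltnW ?orbT.
  by rewrite expnS /c; apply/eq_leq; ring.
have c'_le : c' <= 2 ^ m by apply: leq_trans c'_le_m (ltnW (ltn_expl m _)).
have [B [uniqB sizeB ltB tfB]] :=
  digit_sphere_slopes d_gt0 r_gt0 (behrend_size_bound d_gt0 q_gt0 dq k_le rM_le c'_le).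
exists B; split => // b /ltB lt_b.
by apply: leq_trans Dm_le; rewrite mulnC ltn_pmul2r.
Qed.

Section RealExponents.
Local Open Scope R_scope.

Lemma INR_expn m e : INR (m ^ e)%N = INR m ^ e.
Proof. by elim: e => [|e IH] //=; rewrite expnS mult_INR IH. Qed.

Lemma exponent_ratio_above (alpha : R) : alpha < 1 ->
  exists q : nat, (1 < q)%N /\ alpha <= INR q.-1 / INR q.
Proof.
move=> alpha_lt1; have [q0 q0_gt] := INR_unbounded (/ (1 - alpha)).
exists (maxn q0 2); split; first by rewrite leq_max leqnn orbT.
set q := maxn q0 2.
have q_ge : INR q0 <= INR q by apply: le_INR; apply/leP; rewrite leq_max leqnn.
have q_gt1 : 1 < INR q.
  by apply: (lt_INR 1); apply/ltP; rewrite leq_max leqnn orbT.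
have -> : INR q.-1 = INR q - 1 by rewrite -{2}(@prednK q) ?S_INR; [lra | rewrite leq_max orbC].
have : 1 < INR q * (1 - alpha).
  have := Rmult_lt_compat_r (1 - alpha) _ _ ltac:(lra) (Rlt_le_trans _ _ _ q0_gt q_ge).
  by rewrite Rinv_l; lra.
move=> q_alpha; apply: (Rmult_le_reg_r (INR q)); first lra.
by rewrite /Rdiv Rmult_assoc Rinv_l; lra.
Qed.

Lemma bigO_pow_nat_bound (alpha : R) (k : nat -> nat) : alpha < 1 -> bigO_pow k alpha ->
  exists q K0 n1 : nat, (1 < q)%N /\
    forall n : nat, (n1 <= n)%N -> (k n ^ q <= K0 * n ^ q.-1)%N.
Proof.
move=> alpha_lt1 [C [n1 k_bound]].
have [q [q_gt1 alpha_le]] := exponent_ratio_above alpha_lt1.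
set e := INR q.-1 / INR q in alpha_le.
have [K0 K0_gt] := INR_unbounded (Rabs C ^ q).
exists q, K0, (maxn n1 1); split => // n; rewrite geq_max => /andP[n1_le n_gt0].
have n_ge1 : 1 <= INR n by apply: (le_INR 1); apply/leP.
have k_le : INR (k n) <= Rabs C * Rpower (INR n) e.
  apply: (Rle_trans _ _ _ (k_bound n n1_le)).
  apply: (Rle_trans _ (Rabs C * Rpower (INR n) alpha)).
    by apply: Rmult_le_compat_r; [left; exact: exp_pos | exact: Rle_abs].
  by apply: Rmult_le_compat_l; [exact: Rabs_pos | exact: Rle_Rpower].
have pow_e : Rpower (INR n) e ^ q = INR n ^ q.-1.
  have pos_e : 0 < Rpower (INR n) e by exact: exp_pos.
  rewrite -Rpower_pow // Rpower_mult -Rpower_pow; last lra.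
  have q_pos : 0 < INR q by apply: lt_0_INR; apply/ltP; exact: ltnW.
  by congr Rpower; rewrite /e /Rdiv Rmult_assoc Rinv_l; lra.
apply/leP; apply: INR_le; rewrite mult_INR !INR_expn.
apply: (Rle_trans _ ((Rabs C * Rpower (INR n) e) ^ q)).
  by apply: pow_incr; split; [exact: pos_INR | exact: k_le].
rewrite Rpow_mult_distr pow_e.
by apply: Rmult_le_compat_r; [apply: pow_le; lra | lra].
Qed.

End RealExponents.

Lemma rate_add_div n r k : 0 < r -> 0 < n -> r %| n * k ->
  rate n (n + n * k %/ r) = GRing.mul (r%:R : rat) (GRing.inv ((r + k)%:R : rat)).
Proof.
move=> r_gt0 n_gt0 r_dvd; rewrite /rate; apply/eqP.
rewrite eqr_div ?pnatr_eq0 -?lt0n ?addn_gt0 ?n_gt0 ?r_gt0 // -!natrM eqr_nat.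
by apply/eqP; rewrite mulnDr mulnDr (mulnC r (n * k %/ r)) (divnK r_dvd); lia.
Qed.

Lemma lines_length_le n r k : 0 < r -> r * k <= n -> (n %/ r + 1) * k.-1 <= n * k %/ r.
Proof.
move=> r_gt0 rk_le; rewrite leq_divRL //.
have : r * (n %/ r + 1) <= n + r by rewrite mulnDr muln1 leq_add2r mulnC leq_divM.
nia.
Qed.

Lemma mul_le_of_pow_bound r q K0 k n : 0 < q ->
  k ^ q <= K0 * n ^ q.-1 -> r ^ q * K0 < n -> r * k <= n.
Proof.
move=> q_gt0 kq n_gt; rewrite -(leq_exp2r _ _ q_gt0) expnMn.
apply: (@leq_trans (r ^ q * (K0 * n ^ q.-1))); first by rewrite leq_mul2l kq orbT.
by rewrite -{3}(prednK q_gt0) expnS mulnA leq_mul2r ltnW ?orbT.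
Qed.

Theorem theorem12 :
  forall (alpha : R) (r : nat) (k : nat -> nat),
    Rlt 0 alpha -> Rlt alpha 1 -> (3 <= r)%N -> bigO_pow k alpha ->
    exists n0 : nat, forall n : nat, (n0 <= n)%N -> (r %| n * k n)%N ->
      exists (N : nat) (G : 'M['F_2]_(n, N)),
        is_batch_code G r (k n) /\
        rate n N = GRing.mul (r%:R : rat) (GRing.inv ((r + k n)%:R : rat)).
Proof.
move=> alpha r k _ alpha_lt1 r_ge3 k_bigO.
have r_gt0 : 0 < r by apply: leq_trans r_ge3.
have [q [K0 [n1 [q_gt1 k_le]]]] := bigO_pow_nat_bound alpha_lt1 k_bigO.
have q_gt0 := ltnW q_gt1.
have [M0 slopes] := triangle_free_slopes_exist K0 r_gt0 q_gt0.
exists (maxn n1 (maxn (r * M0) (r ^ q * K0).+1)) => n.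
rewrite !geq_max => /and3P[n1_le rM0_le n_gt] r_dvd.
have n_gt0 : 0 < n := leq_ltn_trans (leq0n _) n_gt.
set M := n %/ r + 1.
have n_lt : n < r * M by rewrite mulnDr muln1 {1}(divn_eq n r) mulnC ltn_add2l ltn_mod.
have M0_le : M0 <= M by apply: leq_trans (leq_addr 1 _); rewrite leq_divRL // mulnC.
have kq : k n ^ q <= K0 * (r * M) ^ q.-1.
  apply: leq_trans (k_le n n1_le) _.
  by rewrite leq_mul2l leq_expn2r ?orbT // ltnW.
have [B [uniqB sizeB ltB tfB]] := slopes M (k n) M0_le kq.
have M_gt0 : 0 < M by rewrite /M addn1.
have batch := lines_batch_code M_gt0 (ltnW n_lt) uniqB ltB tfB r_gt0 sizeB.
have len_le : n + M * size B <= n + n * k n %/ r.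
  by rewrite leq_add2l sizeB lines_length_le // (mul_le_of_pow_bound q_gt0 (k_le n n1_le) n_gt).
exists (n + n * k n %/ r), (pad_columns _ (hypergraph_code (@line n M B))).
by split; [exact: (batch_code_pad_columns len_le batch) | exact: rate_add_div].
Qed.
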